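(* Let $K$ be the field of fractions of a complete discrete valuation ring $\mathcal{O}$. In the coefficient-choosing game of degree $d = 2$ over $K$, whichever player makes the last move has a winning strategy.
   Context: The coefficient-choosing game of degree $d$ over $K$: Nora and Wanda alternately choose coefficients of $f(x) = a_d x^d + \cdots + a_0$; on each move the current player picks a not-yet-chosen coefficient and assigns it a value in $K$, subject to $a_d \neq 0$, $a_0 \neq 0$. After all $d+1$ coefficients are chosen, Wanda wins if $f$ has a root in $K$, and Nora wins otherwise. Who moves first is fixed in advance. *)

From HB Require Import structures.
From mathcomp Require Import all_boot all_order all_algebra.
Set Implicit Arguments. Unset Strict Implicit. Unset Printing Implicit Defensive.
Import Order.TTheory GRing.Theory Num.Theory.
Local Open Scope ring_scope.

(* v is a normalized discrete valuation on K (the value at 0 is irrelevant,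
   conceptually v 0 = +oo). Its valuation ring O = [x | x = 0 \/ 0 <= v x]
   is a DVR whose fraction field is K. *)
Definition is_discrete_valuation (K : fieldType) (v : K -> int) : Prop :=
  [/\ (forall x y : K, x != 0 -> y != 0 -> v (x * y) = v x + v y),
      (forall x y : K, x != 0 -> y != 0 -> x + y != 0 ->
          Num.min (v x) (v y) <= v (x + y)) &
      (exists pi : K, pi != 0 /\ v pi = 1)].

Definition vsmall (K : fieldType) (v : K -> int) (N : int) (x : K) : Prop :=
  x = 0 \/ N <= v x.

Definition v_cauchy (K : fieldType) (v : K -> int) (u : nat -> K) : Prop :=
  forall N : int, exists M : nat, forall m n : nat, (M <= m)%N -> (M <= n)%N ->
    vsmall v N (u m - u n).

Definition v_converges (K : fieldType) (v : K -> int) (u : nat -> K) (l : K) : Prop :=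
  forall N : int, exists M : nat, forall n : nat, (M <= n)%N -> vsmall v N (u n - l).

Definition v_complete (K : fieldType) (v : K -> int) : Prop :=
  forall u : nat -> K, v_cauchy v u -> exists l : K, v_converges v u l.

(* K is the fraction field of a complete DVR: K carries a complete discrete valuation *)
Definition complete_dvf (K : fieldType) (v : K -> int) : Prop :=
  is_discrete_valuation v /\ v_complete v.

Section Game.
Variables (K : fieldType) (d : nat).

(* a position: coefficient a_i is either chosen (Some c) or not yet (None) *)
Definition position := {ffun 'I_d.+1 -> option K}.

Definition start_pos : position := [ffun => None].

Definition legal_move (s : position) (i : 'I_d.+1) (c : K) : Prop :=
  s i = None /\ (((i : nat) == 0%N) || ((i : nat) == d) -> c != 0).

Definition play (s : position) (i : 'I_d.+1) (c : K) : position :=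
  [ffun j => if j == i then Some c else s j].

Definition final_poly (s : position) : {poly K} :=
  \poly_(i < d.+1) odflt 0 (s (inord i)).

Definition has_root_in_K (s : position) : Prop := exists x : K, root (final_poly s) x.

(* Players: true = Wanda, false = Nora.
   game_win p n s m : player p has a winning strategy from position s,
   with n moves remaining and player m to move. *)
Fixpoint game_win (p : bool) (n : nat) (s : position) (m : bool) : Prop :=
  match n with
  | 0 => if p then has_root_in_K s else ~ has_root_in_K s
  | n'.+1 =>
      if m == p then
        exists i c, legal_move s i c /\ game_win p n' (play s i c) (~~ m)
      else
        forall i c, legal_move s i c -> game_win p n' (play s i c) (~~ m)
  end.

Definition wins (p first : bool) : Prop := game_win p d.+1 start_pos first.

Definition last_mover (first : bool) : bool := if odd d then ~~ first else first.

End Game.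

From mathcomp Require Import all_boot all_order all_algebra.
From mathcomp Require Import zify.
Import GRing.Theory.
Local Open Scope ring_scope.

(* The first player, who in degree 2 also moves last, sets a_1 := 0.  The
   opponent must then fix one of a_0, a_2 to a nonzero value, and the last move
   fixes the other one so that -a_0/a_2 is a prescribed t != 0; the final
   polynomial a_0 + a_2 x^2 has a root iff t is a square.  Wanda takes t = 1,
   Nora takes a uniformizer t = pi, which is not a square since squares have
   even valuation. *)

Lemma not_sqr_of_odd_valuation {K : fieldType} {v : K -> int} {t : K} :
  (forall x y : K, x != 0 -> y != 0 -> v (x * y) = v x + v y) ->
  t != 0 -> ~~ (2 %| v t)%Z -> ~ exists x, x ^+ 2 = t.
Proof.
move=> vM t0 odd_vt [x sqx].
have x0 : x != 0 by apply: contraNneq t0 => x0; rewrite -sqx x0 expr0n.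
by move: odd_vt; rewrite -sqx expr2 vM //; lia.
Qed.

Section DegreeTwoGame.
Context {K : fieldType}.

Lemma play_inordE d (s : position K d) (i j : nat) (c : K) :
  (i <= d)%N -> (j <= d)%N ->
  play s (inord i) c (inord j) = if j == i then Some c else s (inord j).
Proof. by move=> id jd; rewrite ffunE -val_eqE /= !inordK. Qed.

Lemma has_root_binomial {s : position K 2} {a0 a2 : K} :
    s (inord 0) = Some a0 -> s (inord 1) = Some 0 -> s (inord 2) = Some a2 ->
    a2 != 0 ->
  has_root_in_K s <-> exists x, x ^+ 2 = - a0 / a2.
Proof.
move=> s0 s1 s2 a20.
have hornerE x : (final_poly s).[x] = a0 + a2 * x ^+ 2.
  rewrite horner_poly !big_ord_recr big_ord0 /= s0 s1 s2 /=.
  by rewrite expr0 mulr1 mul0r add0r addr0 mulrC.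
split=> -[x Hx]; exists x.
- move: Hx; rewrite /root hornerE addrC addr_eq0 => /eqP <-.
  by rewrite mulrAC divff // mul1r.
- by rewrite /root hornerE Hx mulrC divfK // addrN.
Qed.

Lemma wins_deg2_by_forcing_ratio (t : K) (p : bool) :
  t != 0 -> ((exists x : K, x ^+ 2 = t) <-> p) -> wins K 2 p p.
Proof.
move=> t0 sq_tP.
have outcome (s : position K 2) (a0 a2 : K) :
    s (inord 0) = Some a0 -> s (inord 1) = Some 0 -> s (inord 2) = Some a2 ->
    a2 != 0 -> - a0 / a2 = t -> if p then has_root_in_K s else ~ has_root_in_K s.
  move=> s0 s1 s2 a20 ratio; have := has_root_binomial s0 s1 s2 a20.
  rewrite ratio => root_sq.
  by case: p sq_tP => -[sq_p p_sq]; [apply/root_sq/p_sq | move/root_sq/sq_p].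
have negb_eq : (~~ p == p) = false by case: p {sq_tP outcome}.
rewrite /wins /= negbK eqxx negb_eq.
exists (inord 1), 0; split; first by rewrite /legal_move ffunE inordK.
(* The opponent cannot replay a_1, so fixes a_0 or a_2, to some c != 0. *)
move=> i c; rewrite -(inord_val i); case: i => [[|[|[|//]]] _] /=;
  rewrite /legal_move play_inordE ?ffunE //= ?inordK // => -[// _ /(_ isT) c0].
- exists (inord 2), (- c / t); split.
    by rewrite /legal_move !play_inordE ?ffunE ?inordK //= mulf_neq0 ?oppr_eq0 ?invr_eq0.
  apply: (outcome _ c (- c / t)); rewrite ?play_inordE ?divKf ?oppr_eq0 //.
  by rewrite mulf_neq0 ?oppr_eq0 ?invr_eq0.
- exists (inord 0), (- (t * c)); split.
    by rewrite /legal_move !play_inordE ?ffunE ?inordK //= oppr_eq0 mulf_neq0.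
  by apply: (outcome _ (- (t * c)) c); rewrite ?play_inordE // opprK mulfK.
Qed.

End DegreeTwoGame.

Theorem lemma11 (K : fieldType) (v : K -> int) (hv : complete_dvf v)
  (first : bool) :
  wins K 2 (last_mover 2 first) first.
Proof.
have -> : last_mover 2 first = first by [].
case: first.
  apply: (wins_deg2_by_forcing_ratio 1); first exact: oner_neq0.
  by split=> // _; exists 1; rewrite expr1n.
have [[vM _ [pi [pi0 vpi]]] _] := hv.
have pi_not_sqr : ~ exists x, x ^+ 2 = pi.
  by apply: (not_sqr_of_odd_valuation vM pi0); rewrite vpi.
by apply: (wins_deg2_by_forcing_ratio pi) => //; split=> // /pi_not_sqr.
Qed.
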